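(* Let $p<q$ be coprime positive integers and $m$ a positive integer. Let $A=\mathbb C[X_0,\dots,X_4]$, graded by $\mathbb Z\times\mathbb Z/m\mathbb Z$ with $X_0$ of degree $(1,0)$, $X_1,X_2$ of degree $(-p,-1)$, $X_3,X_4$ of degree $(q,1)$, and for $s\in\mathbb C$ let $I_s=(X_0^{q-p}-X_1X_4,\;X_2,\;X_3,\;s-X_0^{mp}X_1^{m})$. Then $\dim(A/I_1)_{(n,d)}\ge 1$ and $\dim(A/I_0)_{(n,d)}\ge 1$ for all $(n,d)\in\mathbb Z\times\mathbb Z/m\mathbb Z$.
   Context: The grading is the weight grading for the action of $G_0\times G_m$ ($G_0\cong\mathbb C^*$, $G_m\cong\mu_m$) on $\mathbb C^5$ given by $t\cdot(x_0,\dots,x_4)=(tx_0,t^{-p}x_1,t^{-p}x_2,t^qx_3,t^qx_4)$ and $\zeta\cdot(x_0,\dots,x_4)=(x_0,\zeta^{-1}x_1,\zeta^{-1}x_2,\zeta x_3,\zeta x_4)$. *)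

(* multivariate polynomials (multinomials) over C = R[i],
   R an arbitrary realType (a complete archimedean field, i.e. the reals). *)
From HB Require Import structures.
From mathcomp Require Import all_boot all_order all_algebra.
From mathcomp Require Import reals complex.
From mathcomp Require Import mpoly.
Set Implicit Arguments. Unset Strict Implicit. Unset Printing Implicit Defensive.
Import Order.TTheory GRing.Theory Num.Theory.
Local Open Scope ring_scope.

Definition Apoly (R : realType) := {mpoly R[i][5]}.

Definition degZ (p q : nat) (mon : 'X_{1..5}) : int :=
  (mon (inord 0))%:Z - (p * (mon (inord 1) + mon (inord 2)))%:Z
  + (q * (mon (inord 3) + mon (inord 4)))%:Z.

(* Representative in Z of the Z/mZ-component of the degree:
   X_0 -> 0, X_1,X_2 -> -1, X_3,X_4 -> 1. *)
Definition degM (mon : 'X_{1..5}) : int :=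
  (mon (inord 3) + mon (inord 4))%:Z - (mon (inord 1) + mon (inord 2))%:Z.

Definition homog_of (R : realType) (p q m : nat) (n d : int) (f : Apoly R) : Prop :=
  forall mon : 'X_{1..5}, mon \in msupp f ->
    degZ p q mon = n /\ (degM mon = d %[mod m%:Z])%Z.

Definition in_ideal (R : realType) (gens : seq (Apoly R)) (f : Apoly R) : Prop :=
  exists c : seq (Apoly R), size c = size gens /\
    f = \sum_(i < size gens) c`_i * gens`_i.

Definition Igens (R : realType) (p q m : nat) (s : R[i]) : seq (Apoly R) :=
  [:: 'X_(inord 0) ^+ (q - p) - 'X_(inord 1) * 'X_(inord 4);
      'X_(inord 2); 'X_(inord 3);
      s%:MP - 'X_(inord 0) ^+ (m * p) * 'X_(inord 1) ^+ m].

(* dim (A/I)_{(n,d)} >= 1 : since I is homogeneous, (A/I)_{(n,d)} =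
   A_{(n,d)} / (I cap A_{(n,d)}); it is nonzero iff some element of A_{(n,d)}
   is not in I. *)
Definition graded_piece_nonzero (R : realType) (p q m : nat) (s : R[i]) (n d : int) : Prop :=
  exists f : Apoly R, homog_of p q m n d f /\ ~ in_ideal (Igens p q m s) f.

From HB Require Import structures.
From mathcomp Require Import all_boot all_order all_algebra.
From mathcomp Require Import reals complex.
From mathcomp Require Import mpoly.
From mathcomp Require Import zify ring.
Set Implicit Arguments. Unset Strict Implicit. Unset Printing Implicit Defensive.
Import Order.TTheory GRing.Theory Num.Theory.
Local Open Scope ring_scope.

(* It suffices to find a monomial X_0^a X_1^b X_4^c of degree (n, d) outside
   I_s.  Membership in I_s is obstructed by a ring map A -> C[t] (with
   X_2, X_3 |-> 0) sending every generator into a principal ideal (r) but the monomial outside it.  For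
   s = 1 take X_0, X_1, X_4 |-> 1 and r = t.  For s = 0 take either
   X_0 |-> t, X_1 |-> 1, X_4 |-> t^(q-p) and r = t^(mp), or
   X_0 |-> t, X_1 |-> t^(q-p), X_4 |-> 1 and r = t^(mq); the monomial goes to
   t^(a+(q-p)c), resp. t^(a+(q-p)b), and a congruence argument produces, in
   every degree, a monomial for which one of these exponents is small. *)

Lemma exists_congr_window (n d u m : int) : 0 < u -> 0 < m ->
  exists2 t : int, (t = d %[mod m])%Z & 0 <= n - u * t < m * u.
Proof.
move=> u_gt0 m_gt0; set k := ((n - u * d) %/ (m * u))%Z.
exists (d + m * k); first by rewrite addrC mulrC modzMDl.
have -> : n - u * (d + m * k) = ((n - u * d) %% (m * u))%Z.
  by apply: (@addrI _ (k * (m * u))); rewrite -divz_eq; ring.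
have mu_gt0 : 0 < m * u by rewrite pmulr_rgt0.
by rewrite modz_ge0 ?ltz_pmod // gt_eqF.
Qed.

Lemma exists_exponents (p q m : nat) (n d : int) :
  (0 < p)%N -> (p < q)%N -> (0 < m)%N ->
  exists a b c : nat,
    [/\ a%:Z - (p * b)%:Z + (q * c)%:Z = n, (c%:Z - b%:Z = d %[mod m])%Z
      & (a + (q - p) * c < m * p)%N \/ (a + (q - p) * b < m * q)%N].
Proof.
move=> p_gt0 lt_pq m_gt0.
(* t is c - b, realised with b = 0 or c = 0 according to its sign. *)
pose u : nat := if n <= 0 then p else q.
have u_cases : (n <= 0 /\ u = p) \/ (0 < n /\ u = q).
  by rewrite /u; case: lerP; [left | right].
have [t t_mod /andP[t_lo t_hi]] := @exists_congr_window n d u m ltac:(lia) ltac:(lia).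
have [t_ge0 | t_lt0] := lerP 0 t.
- exists (absz (n - q%:Z * t)%R), 0%N, (absz t).
  rewrite subr0 abszE gez0_abs //; split=> //; case: u_cases => -[n_sgn u_def];
    rewrite u_def in t_lo t_hi; nia.
- exists (absz (n - p%:Z * t)%R), (absz t), 0%N.
  rewrite sub0r abszE ltz0_abs // opprK; split=> //; case: u_cases => -[n_sgn u_def];
    rewrite u_def in t_lo t_hi; nia.
Qed.

Definition mnm014 (a b c : nat) : 'X_{1..5} :=
  [multinom nth 0%N [:: a; b; 0; 0; c] i | i < 5].

Lemma degZ_mnm014 (p q a b c : nat) :
  degZ p q (mnm014 a b c) = a%:Z - (p * b)%:Z + (q * c)%:Z.
Proof. by rewrite /degZ !mnmE !inordK //= addn0 add0n. Qed.

Lemma degM_mnm014 (a b c : nat) : degM (mnm014 a b c) = c%:Z - b%:Z.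
Proof. by rewrite /degM !mnmE !inordK //= addn0 add0n. Qed.

Definition subst014 (S : nzRingType) (x0 x1 x4 : S) (i : 'I_5) : S :=
  nth 0 [:: x0; x1; 0; 0; x4] i.

Section Substitution.
Variables (K : nzRingType) (S : comNzRingType) (f : {rmorphism K -> S}) (x0 x1 x4 : S).
Local Notation phi := (mmap f (subst014 x0 x1 x4)).

Lemma mmap_subst014_X (i : 'I_5) : phi 'X_i = subst014 x0 x1 x4 i.
Proof. by rewrite mmapX mmap1U. Qed.

Lemma mmap_subst014_mnm014 (a b c : nat) :
  phi 'X_[mnm014 a b c] = x0 ^+ a * x1 ^+ b * x4 ^+ c.
Proof.
by rewrite mmapX /mmap1 !big_ord_recl big_ord0 !mnmE /= !expr0n /= !mul1r mulr1 mulrA.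
Qed.

End Substitution.

Section GradedPieces.
Variable R : realType.
Local Notation C := R[i].

Lemma in_ideal_dvdp (K : idomainType) (phi : {rmorphism Apoly R -> {poly K}})
    (r : {poly K}) (gens : seq (Apoly R)) (f : Apoly R) :
  in_ideal gens f -> all (fun g => r %| phi g) gens -> r %| phi f.
Proof.
move=> [c [_ ->]] /allP gens_r; rewrite rmorph_sum.
elim/big_ind: _ => [|g h|i _]; [exact: dvdp0 | exact: dvdp_add |].
by rewrite rmorphM dvdp_mull // gens_r // mem_nth.
Qed.

Lemma mnm014_notin_Igens (p q m : nat) (s : C) (a b c : nat) (x0 x1 x4 r : {poly C}) :
  x0 ^+ (q - p) = x1 * x4 -> r %| s%:P - x0 ^+ (m * p) * x1 ^+ m ->
  ~~ (r %| x0 ^+ a * x1 ^+ b * x4 ^+ c) ->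
  ~ in_ideal (Igens p q m s) 'X_[mnm014 a b c].
Proof.
move=> rel01 r_dvd /negP r_ndvd f_in; apply: r_ndvd.
rewrite -(mmap_subst014_mnm014 (@polyC C)); apply: (in_ideal_dvdp f_in).
rewrite /= !(rmorphB, rmorphM, rmorphXn) /= !mmap_subst014_X mmapC /subst014.
by rewrite !inordK //= rel01 subrr dvdp0 r_dvd.
Qed.

Lemma homog_mnm014 (p q m : nat) (n d : int) (a b c : nat) :
  a%:Z - (p * b)%:Z + (q * c)%:Z = n -> (c%:Z - b%:Z = d %[mod m])%Z ->
  homog_of p q m n d ('X_[mnm014 a b c] : Apoly R).
Proof.
move=> degZ_n degM_d mon; rewrite msuppX inE => /eqP ->.
by rewrite degZ_mnm014 degM_mnm014.
Qed.

Lemma graded_piece_nonzero_1 (p q m : nat) (n d : int) :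
  (0 < p)%N -> (p < q)%N -> (0 < m)%N -> graded_piece_nonzero p q m (1 : C) n d.
Proof.
move=> p_gt0 lt_pq m_gt0.
have [a [b [c [degZ_n degM_d _]]]] := exists_exponents n d p_gt0 lt_pq m_gt0.
exists 'X_[mnm014 a b c]; split; first exact: homog_mnm014.
apply: (@mnm014_notin_Igens _ _ _ _ _ _ _ 1 1 1 'X).
- by rewrite expr1n mulr1.
- by rewrite !expr1n mulr1 subrr dvdp0.
- by rewrite !expr1n !mulr1 dvdp1 size_polyX.
Qed.

Lemma graded_piece_nonzero_0 (p q m : nat) (n d : int) :
  (0 < p)%N -> (p < q)%N -> (0 < m)%N -> graded_piece_nonzero p q m (0 : C) n d.
Proof.
move=> p_gt0 lt_pq m_gt0.
have [a [b [c [degZ_n degM_d small]]]] := exists_exponents n d p_gt0 lt_pq m_gt0.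
exists 'X_[mnm014 a b c]; split; first exact: homog_mnm014.
case: small => [small | small].
- apply: (@mnm014_notin_Igens _ _ _ _ _ _ _ 'X 1 'X^(q - p) 'X^(m * p)).
  + by rewrite mul1r.
  + by rewrite expr1n mulr1 sub0r dvdpNr.
  + by rewrite expr1n mulr1 -exprM -exprD dvdp_Pexp2l ?size_polyX // -ltnNge.
- apply: (@mnm014_notin_Igens _ _ _ _ _ _ _ 'X 'X^(q - p) 1 'X^(m * q)).
  + by rewrite mulr1.
  + rewrite sub0r dvdpNr -!exprM -exprD dvdp_exp2l //; lia.
  + by rewrite expr1n mulr1 -exprM -exprD dvdp_Pexp2l ?size_polyX // -ltnNge.
Qed.

End GradedPieces.

Theorem lemma4p6 (R : realType) (p q m : nat) :
  (0 < p)%N -> (p < q)%N -> coprime p q -> (0 < m)%N ->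
  forall (n d : int),
    graded_piece_nonzero p q m (1 : R[i]) n d /\
    graded_piece_nonzero p q m (0 : R[i]) n d.
Proof.
move=> p_gt0 lt_pq _ m_gt0 n d.
by split; [apply: graded_piece_nonzero_1 | apply: graded_piece_nonzero_0].
Qed.
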